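(* Let $A$ be an $m\times m$ coloring matrix, let $m'\ge1$, and let $A'$ be the $(m+m')\times(m+m')$ block matrix $$A'=\left[\begin{array}{c|c}A&0\\\hline \mathbf{1}&0\end{array}\right],$$ where $\mathbf{1}$ is the $m'\times m$ all-ones matrix and the $0$ blocks are zero matrices. Then $$F_{A'}(x)=F_A(x)+\frac{m'x}{1-F_A(x)}.$$
   Context: A plane tree is an unlabeled rooted tree in which the children of every vertex are linearly ordered. A coloring matrix is a square matrix $A=(a_{ij})$ with entries in $\{0,1\}$. An $A$-coloring of a plane tree assigns to each vertex a color (an index of a row of $A$) such that whenever a vertex of color $j$ is a child of a vertex of color $i$, $a_{ij}=1$. Let $t_A(n)$ be the number of pairs (plane tree with $n$ vertices, $A$-coloring of it), and $F_A(x)=\sum_{n\ge1}t_A(n)x^n$ (formal power series). *)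

From Stdlib Require Import ClassicalEpsilon.
From Stdlib Require List.
From mathcomp Require Import all_boot all_order all_algebra.
Set Implicit Arguments. Unset Strict Implicit. Unset Printing Implicit Defensive.
Import GRing.Theory Num.Theory.
Local Open Scope ring_scope.

(* A plane tree together with an assignment of a color in 'I_m to each vertex:
   the children of each vertex are linearly ordered (a list). *)
Inductive ctree (m : nat) : Type := CNode : 'I_m -> seq (ctree m) -> ctree m.

Definition ct_color m (t : ctree m) : 'I_m := let: CNode c _ := t in c.

Fixpoint ct_size m (t : ctree m) : nat :=
  let: CNode _ ts := t in (sumn (map (@ct_size m) ts)).+1.

Inductive ptree : Type := PNode : seq ptree -> ptree.
Fixpoint ct_shape m (t : ctree m) : ptree :=
  let: CNode _ ts := t in PNode (map (@ct_shape m) ts).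

(* the coloring is an A-coloring: a child of color j of a vertex of color i
   requires a_ij = 1 (true) *)
Fixpoint ct_valid m (A : 'M[bool]_m) (t : ctree m) : bool :=
  let: CNode c ts := t in
  all (fun s => A c (ct_color s)) ts && all (@ct_valid m A) ts.

(* cardinality of a finite set given as a predicate: the length of a
   duplicate-free list enumerating it exactly (0 if no such list exists) *)
Definition card_pred (T : Type) (P : T -> Prop) : nat :=
  epsilon (inhabits 0%N) (fun k => exists s : seq T,
    List.NoDup s /\ (forall x, List.In x s <-> P x) /\ size s = k).

(* t_A(n): number of pairs (plane tree with n vertices, A-coloring of it),
   i.e. number of A-validly colored plane trees with n vertices *)
Definition tA m (A : 'M[bool]_m) (n : nat) : nat :=
  card_pred (fun t : ctree m => ct_size t = n /\ ct_valid A t).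

Definition fps := nat -> rat.
Definition fps_add (f g : fps) : fps := fun n => f n + g n.
Definition fps_sub (f g : fps) : fps := fun n => f n - g n.
Definition fps_mul (f g : fps) : fps :=
  fun n => \sum_(i < n.+1) f i * g (n - i)%N.
Definition fps_const (c : rat) : fps := fun n => if n == 0%N then c else 0.
Definition fps_X : fps := fun n => if n == 1%N then 1 else 0.

Fixpoint fps_inv_aux (f : fps) (n : nat) : seq rat :=
  match n with
  | 0%N => [:: (f 0%N)^-1]
  | n'.+1 => let s := fps_inv_aux f n' in
      rcons s (- (f 0%N)^-1 *
               \sum_(i < n'.+1) f i.+1 * nth 0 s (n' - i)%N)
  end.
Definition fps_inv (f : fps) : fps := fun n => nth 0 (fps_inv_aux f n) n.
Definition fps_div (f g : fps) : fps := fps_mul f (fps_inv g).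

Definition FA m (A : 'M[bool]_m) : fps :=
  fun n => if n == 0%N then 0 else (tA A n)%:R.

Definition ext_mx m m' (A : 'M[bool]_m) : 'M[bool]_(m + m') :=
  block_mx A (const_mx false) (const_mx true) (const_mx false).

From HB Require Import structures.
From mathcomp Require Import all_boot all_order all_algebra.
From Stdlib Require Import ClassicalEpsilon FunctionalExtensionality.
From Stdlib Require List.
Set Implicit Arguments. Unset Strict Implicit. Unset Printing Implicit Defensive.

(* The columns of A' indexed by the m' new colors vanish, so a new color can
   only sit at the root, and a new-colored root may have any old-colored
   children.  Hence an A'-colored tree with n + 1 vertices is either an
   A-colored tree, or one of m' new roots carrying an ordered forest of
   A-colored trees with n vertices in total.  Such forests are sequences of
   A-colored trees, so they are counted by the coefficients of 1 / (1 - F_A):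
   splitting off the first tree gives exactly the recurrence defining the
   inverse series. *)

Section Enumerations.
Variable T : eqType.
Implicit Types (s : seq T) (p : pred T).

Lemma InP x s : reflect (List.In x s) (x \in s).
Proof.
elim: s => [|y s IHs] /=; first by constructor.
by rewrite inE; apply: (iffP predU1P) => -[-> | /IHs]; auto.
Qed.

Lemma NoDupP s : reflect (List.NoDup s) (uniq s).
Proof.
elim: s => [|x s IHs] /=; first by do 2 constructor.
apply: (iffP andP) => [[/InP x_s /IHs] | /List.NoDup_cons_iff[/InP x_s /IHs]].
  by constructor.
by split.
Qed.

Lemma card_predE (P : T -> Prop) s :
  uniq s -> (forall x, reflect (P x) (x \in s)) -> card_pred P = size s.
Proof.
move=> s_uniq sP; rewrite /card_pred.
set Q := fun k => _.
have [|s' [/NoDupP s'_uniq [s'P <-]]] := @epsilon_spec _ (inhabits 0) Q.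
  exists (size s), s; split; first exact/NoDupP.
  by split=> // x; split=> [/InP/sP | /sP/InP].
apply/esym/perm_size/uniq_perm => // x.
by apply/idP/idP => [/sP/s'P/InP | /InP/s'P/sP].
Qed.

Definition enumerates p s := uniq s /\ s =i p.

Lemma card_enumerates p s : enumerates p s -> card_pred (fun x => p x) = size s.
Proof. by case=> s_uniq sE; apply: card_predE => // x; rewrite sE; apply: idP. Qed.

Definition enum_pick p := epsilon (inhabits [::]) (enumerates p).

Lemma enum_pickP p : (exists s, enumerates p s) -> enumerates p (enum_pick p).
Proof. exact: epsilon_spec. Qed.

End Enumerations.

Section CtreeEncoding.
Variable m : nat.

Fixpoint ctree_enc (t : ctree m) : GenTree.tree 'I_m :=
  let: CNode c ts := t in GenTree.Node 0 (GenTree.Leaf c :: map ctree_enc ts).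

Fixpoint ctree_dec (g : GenTree.tree 'I_m) : option (ctree m) :=
  if g is GenTree.Node _ (GenTree.Leaf c :: gs) then
    Some (CNode c (pmap ctree_dec gs))
  else None.

Lemma ctree_encK : pcancel ctree_enc ctree_dec.
Proof.
rewrite /pcancel; fix encK 1 => -[c ts] /=; congr (Some (CNode c _)).
by elim: ts => //= t ts IHts; rewrite encK /= IHts.
Qed.

End CtreeEncoding.

HB.instance Definition _ m := Countable.copy (ctree m) (pcan_type (@ctree_encK m)).

Lemma ctree_ind m (P : ctree m -> Prop) :
  (forall c (ts : seq (ctree m)), (forall t, t \in ts -> P t) -> P (CNode c ts)) ->
  forall t, P t.
Proof.
move=> IH; fix ind 1 => -[c ts]; apply: IH.
elim: ts => [|t ts IHts] u; first discriminate.
rewrite inE => /predU1P[-> | /IHts //]; exact: ind.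
Qed.

Lemma ct_size_gt0 m (t : ctree m) : 0 < ct_size t.
Proof. by case: t. Qed.

Section ColoredTrees.
Variables (m : nat) (A : 'M[bool]_m).

Definition is_tree n (t : ctree m) := (ct_size t == n) && ct_valid A t.

Definition is_forest n (f : seq (ctree m)) :=
  (sumn (map (@ct_size m) f) == n) && all (ct_valid A) f.

Lemma enumerates_trees0 : enumerates (is_tree 0) [::].
Proof. by split=> // t; rewrite unfold_in /is_tree eqn0Ngt ct_size_gt0. Qed.

Lemma enumerates_forests0 : enumerates (is_forest 0) [:: [::]].
Proof.
split=> // -[|t f]; rewrite inE unfold_in /is_forest //=.
by rewrite addn_eq0 eqn0Ngt ct_size_gt0.
Qed.

Lemma enumerates_trees_succ n sf : enumerates (is_forest n) sf ->
  enumerates (is_tree n.+1)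
    (filter (ct_valid A) [seq CNode c f | c <- enum 'I_m, f <- sf]).
Proof.
move=> [sf_uniq sfE]; split.
  by apply/filter_uniq/allpairs_uniq => [||[c f] [d g] _ _ [-> ->]]; rewrite ?enum_uniq.
move=> [c f]; rewrite mem_filter.
have -> : (CNode c f \in [seq CNode c f | c <- enum 'I_m, f <- sf]) = (f \in sf).
  apply/allpairsP/idP => [[[d g] [_ g_sf [_ ->]]] // | f_sf].
  by exists (c, f); rewrite mem_enum.
rewrite sfE !unfold_in /is_tree /is_forest /= eqSS.
by case: (_ == n); case: (all (ct_valid A) f); rewrite ?andbF ?andbT.
Qed.

Section ForestsSucc.
Variables (n : nat) (st : nat -> seq (ctree m)) (sf : nat -> seq (seq (ctree m))).
Hypothesis stE : forall k, k <= n -> enumerates (is_tree k.+1) (st k).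
Hypothesis sfE : forall k, k <= n -> enumerates (is_forest (n - k)) (sf k).

Let mem_iota_le k : (k \in iota 0 n.+1) = (k <= n).
Proof. by rewrite mem_iota ltnS. Qed.

Let mem_st k t : k <= n -> (t \in st k) = is_tree k.+1 t.
Proof. by move=> le_kn; rewrite (stE le_kn).2. Qed.

Let mem_sf k f : k <= n -> (f \in sf k) = is_forest (n - k) f.
Proof. by move=> le_kn; rewrite (sfE le_kn).2. Qed.

Lemma uniq_forests_succ :
  uniq [seq tf | k <- iota 0 n.+1, tf <- [seq t :: f | t <- st k, f <- sf k]].
Proof.
apply: allpairs_uniq_dep => [|k|]; first exact: iota_uniq.
  rewrite mem_iota_le => le_kn.
  apply: allpairs_uniq => [||[t f] [t' f'] _ _ [-> ->]] //.
    exact: (stE le_kn).1.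
  exact: (sfE le_kn).1.
have size_st k t : k \in iota 0 n.+1 -> t \in st k -> ct_size t = k.+1.
  by rewrite mem_iota_le => le_kn; rewrite mem_st // => /andP[/eqP].
move=> p p' /allpairsPdep[k [_ [k_in /allpairsP[[t f] [t_st _ ->]] ->]]].
move=> /allpairsPdep[k' [_ [k'_in /allpairsP[[t' f'] [t'_st _ ->]] ->]]] /= [eq_t ->].
have := size_st k t k_in t_st.
by rewrite eq_t (size_st k' t' k'_in t'_st) => -[->].
Qed.

Lemma mem_forests_succ :
  [seq tf | k <- iota 0 n.+1, tf <- [seq t :: f | t <- st k, f <- sf k]]
  =i is_forest n.+1.
Proof.
move=> z; apply/allpairsPdep/idP.
  move=> [k [_ [k_in /allpairsP[[t f] [/= t_st f_sf ->]] ->]]].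
  move: k_in t_st f_sf; rewrite mem_iota_le => le_kn.
  rewrite mem_st // mem_sf // unfold_in /is_tree /is_forest /=.
  move=> /andP[/eqP -> ->] /andP[/eqP -> ->].
  by rewrite addSn (subnKC le_kn) eqxx.
move=> /[!unfold_in] /andP[/eqP sum_z valid_z].
case: z sum_z valid_z => [//|t f sum_tf /andP[valid_t valid_f]].
have size_t : ct_size t = (ct_size t).-1.+1 by rewrite prednK ?ct_size_gt0.
have le_tn : (ct_size t).-1 <= n by rewrite -ltnS -size_t -sum_tf /= leq_addr.
exists (ct_size t).-1, (t :: f); split => //; first by rewrite mem_iota_le.
apply: allpairs_f; first by rewrite mem_st // /is_tree -size_t eqxx.
rewrite mem_sf // /is_forest; apply/andP; split => //.
by rewrite -(eqn_add2l (ct_size t).-1) subnKC // -eqSS -addSn -size_t; apply/eqP.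
Qed.

Lemma enumerates_forests_succ :
  enumerates (is_forest n.+1)
    [seq tf | k <- iota 0 n.+1, tf <- [seq t :: f | t <- st k, f <- sf k]].
Proof. exact: (conj uniq_forests_succ mem_forests_succ). Qed.

End ForestsSucc.

Definition trees n := enum_pick (is_tree n).
Definition forests n := enum_pick (is_forest n).

Lemma trees_forestsP n :
  enumerates (is_tree n) (trees n) /\ enumerates (is_forest n) (forests n).
Proof.
elim/ltn_ind: n => -[_ | n IH].
  by split; apply: enum_pickP; eexists; [apply: enumerates_trees0 | apply: enumerates_forests0].
have treesP : enumerates (is_tree n.+1) (trees n.+1).
  apply: enum_pickP; eexists; apply: enumerates_trees_succ.
  exact: (IH n (ltnSn n)).2.
split=> //; apply: enum_pickP; eexists.
apply: (@enumerates_forests_succ n (fun k => trees k.+1) (fun k => forests (n - k))).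
  move=> k; rewrite leq_eqVlt => /predU1P[-> // | lt_kn].
  exact: (IH k.+1 lt_kn).1.
by move=> k le_kn; apply: (IH (n - k) _).2; rewrite ltnS leq_subr.
Qed.

Lemma treesP n : enumerates (is_tree n) (trees n).
Proof. exact: (trees_forestsP n).1. Qed.

Lemma forestsP n : enumerates (is_forest n) (forests n).
Proof. exact: (trees_forestsP n).2. Qed.

Definition nforests n := card_pred (fun f => is_forest n f).

Lemma tA_enumerates n s : enumerates (is_tree n) s -> tA A n = size s.
Proof.
case=> s_uniq sE; apply: card_predE => // t.
by rewrite sE unfold_in; apply: (iffP andP) => -[/eqP].
Qed.

Lemma tA_trees n : tA A n = size (trees n).
Proof. exact/tA_enumerates/treesP. Qed.

Lemma nforests_forests n : nforests n = size (forests n).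
Proof. exact/card_enumerates/forestsP. Qed.

Lemma nforests0 : nforests 0 = 1.
Proof. exact: card_enumerates enumerates_forests0. Qed.

Lemma nforestsS n :
  nforests n.+1 = \sum_(k < n.+1) tA A k.+1 * nforests (n - k).
Proof.
rewrite {1}/nforests (card_enumerates (enumerates_forests_succ
  (st := fun k => trees k.+1) (sf := fun k => forests (n - k))
  (fun k _ => treesP _) (fun k _ => forestsP _))).
rewrite size_allpairs_dep sumnE big_map -[iota 0 n.+1]/(index_iota 0 n.+1) big_mkord.
by apply: eq_bigr => k _; rewrite size_allpairs tA_trees nforests_forests.
Qed.

End ColoredTrees.

Lemma map_preimage (S : Type) (T : eqType) (g : S -> T) (q : pred S) (s : seq T) :
  (forall x, x \in s -> exists2 y, x = g y & q y) ->
  exists2 ys, s = map g ys & all q ys.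
Proof.
elim: s => [|x s IHs] s_img; first by exists [::].
have [y -> qy] := s_img x (mem_head x s).
have [ys -> qys] : exists2 ys, s = map g ys & all q ys.
  by apply: IHs => z z_s; apply: s_img; rewrite inE z_s orbT.
by exists (y :: ys); rewrite /= ?qy.
Qed.

Section Recoloring.
Variables (m k : nat) (f : 'I_m -> 'I_k).

Fixpoint recolor (t : ctree m) : ctree k :=
  let: CNode c ts := t in CNode (f c) (map recolor ts).

Lemma ct_size_recolor t : ct_size (recolor t) = ct_size t.
Proof.
elim/ctree_ind: t => c ts IH /=; congr (sumn _).+1.
by rewrite -map_comp; apply/eq_in_map => t /IH.
Qed.

Lemma ct_color_recolor t : ct_color (recolor t) = f (ct_color t).
Proof. by case: t. Qed.

Lemma recolor_inj : injective f -> injective recolor.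
Proof.
move=> f_inj; elim/ctree_ind => c ts IH [d us] [/f_inj -> eq_ts]; congr CNode.
elim: ts us IH eq_ts => [|t ts IHts] [|u us] //= IH [eq_tu eq_ts].
rewrite (IH t (mem_head t ts) u eq_tu); congr cons.
by apply: IHts eq_ts => v v_ts; apply: IH; rewrite inE v_ts orbT.
Qed.

Variables (A : 'M[bool]_m) (B : 'M[bool]_k).
Hypothesis BfE : forall i j, B (f i) (f j) = A i j.

Lemma ct_valid_recolor t : ct_valid B (recolor t) = ct_valid A t.
Proof.
elim/ctree_ind: t => c ts IH /=; rewrite !all_map; congr andb.
  by apply: eq_all => t /=; rewrite ct_color_recolor BfE.
by apply: eq_in_all => t /IH.
Qed.

Hypothesis B_codom : forall i c, B (f i) c -> c \in codom f.

Lemma recolor_onto t : ct_valid B t -> ct_color t \in codom f ->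
  exists2 u, t = recolor u & ct_valid A u.
Proof.
elim/ctree_ind: t => c ts IH /= /andP[colors_ts valid_ts] /codomP[i c_eq].
have [us ts_eq valid_us] : exists2 us, ts = map recolor us & all (ct_valid A) us.
  apply: map_preimage => t t_ts; apply: IH => //; first exact: (allP valid_ts).
  by have := allP colors_ts t t_ts; rewrite c_eq; apply: B_codom.
exists (CNode i us); first by rewrite c_eq ts_eq.
rewrite /= valid_us andbT; apply/allP => u u_us.
by rewrite -BfE -ct_color_recolor -c_eq (allP colors_ts) // ts_eq map_f.
Qed.

Lemma recolor_onto_forest ts : all (ct_valid B) ts ->
  all (fun t => ct_color t \in codom f) ts ->
  exists2 us, ts = map recolor us & all (ct_valid A) us.
Proof.
move=> /allP valid_ts /allP colors_ts; apply: map_preimage => t t_ts.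
by apply: recolor_onto; [apply: valid_ts | apply: colors_ts].
Qed.

End Recoloring.

Section ExtendedMatrix.
Variables (m m' : nat) (A : 'M[bool]_m).
Local Notation B := (ext_mx m' A).
Local Notation embed := (recolor (lshift m')).

Lemma ext_mxEul i j : B (lshift m' i) (lshift m' j) = A i j.
Proof. by rewrite /ext_mx block_mxEul. Qed.

Lemma ext_mxEdl i j : B (rshift m i) (lshift m' j) = true.
Proof. by rewrite /ext_mx block_mxEdl mxE. Qed.

Lemma ext_mx_codom i c : B i c -> c \in codom (lshift m').
Proof.
case: (split_ordP c) => [j -> _ | j ->]; first exact: codom_f.
by case: (split_ordP i) => [i' | i'] ->; rewrite ?block_mxEur ?block_mxEdr mxE.
Qed.

Local Notation ext_trees n :=
  (map embed (trees A n.+1) ++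
   [seq CNode (rshift m j) (map embed f) | j <- enum 'I_m', f <- forests A n]).

Lemma uniq_ext_trees n : uniq (ext_trees n).
Proof.
have embed_inj : injective embed := recolor_inj (@lshift_inj m m').
rewrite cat_uniq map_inj_uniq // (treesP A n.+1).1 /=; apply/andP; split.
  apply/hasPn => _ /allpairsP[[j f] [_ _ ->]].
  apply/mapP => -[u _ /(congr1 (@ct_color _))].
  by rewrite ct_color_recolor => /esym/eqP; rewrite eq_lrshift.
apply: allpairs_uniq => [||[j f] [j' f'] _ _ [/addnI/val_inj -> /inj_map -> //]].
  exact: enum_uniq.
exact: (forestsP A n).1.
Qed.

Lemma mem_ext_trees n : ext_trees n =i is_tree B n.+1.
Proof.
have size_embed f : sumn (map (@ct_size _) (map embed f)) = sumn (map (@ct_size m) f).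
  by rewrite -map_comp (eq_map (@ct_size_recolor _ _ _)).
have valid_embed := ct_valid_recolor ext_mxEul.
have old_children i c := @ext_mx_codom (lshift m' i) c.
have [treesE forestsE] := ((treesP A n.+1).2, (forestsP A n).2).
move=> z; rewrite [RHS]unfold_in mem_cat /is_tree; apply/idP/andP.
  case/orP=> [/mapP[u] | /allpairsP[[j f] [_ /= f_forests ->]]].
    rewrite treesE unfold_in /is_tree => /andP[? ?] ->.
    by rewrite ct_size_recolor valid_embed.
  move: f_forests; rewrite forestsE unfold_in /is_forest => /andP[/eqP sum_f valid_f].
  rewrite /= size_embed sum_f !all_map; split=> //; apply/andP; split.
    by apply/allP => u _ /=; rewrite ct_color_recolor ext_mxEdl.
  by rewrite (eq_all valid_embed).
case: z => c ts [/eqP size_z valid_z]; case: (split_ordP c) => [i c_eq | j c_eq].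
  have old_root : ct_color (CNode c ts) \in codom (lshift m') by rewrite c_eq codom_f.
  have [u z_eq valid_u] := recolor_onto ext_mxEul old_children valid_z old_root.
  apply/orP; left; rewrite z_eq map_f // treesE unfold_in /is_tree valid_u andbT.
  by rewrite -(ct_size_recolor (lshift m')) -z_eq size_z.
move: valid_z; rewrite c_eq => /andP[colors_ts valid_ts].
have [us ts_eq valid_us] := recolor_onto_forest ext_mxEul old_children valid_ts
  (sub_all (fun t => @ext_mx_codom _ _) colors_ts).
apply/orP; right; rewrite ts_eq; apply: allpairs_f; first by rewrite mem_enum.
rewrite forestsE unfold_in /is_forest valid_us andbT -size_embed -ts_eq.
by move: size_z => [->].
Qed.

Lemma tA_ext_mx n : tA B n.+1 = tA A n.+1 + m' * nforests A n.
Proof.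
rewrite (tA_enumerates (conj (uniq_ext_trees n) (mem_ext_trees n))) size_cat size_map -tA_trees.
by rewrite size_allpairs size_enum_ord -nforests_forests.
Qed.

End ExtendedMatrix.

Import GRing.Theory.
Local Open Scope ring_scope.

Lemma size_fps_inv_aux f n : size (fps_inv_aux f n) = n.+1.
Proof. by elim: n => //= n IHn; rewrite size_rcons IHn. Qed.

Lemma nth_fps_inv_aux f n i : (i <= n)%N -> nth 0 (fps_inv_aux f n) i = fps_inv f i.
Proof.
elim: n => [|n IHn]; first by rewrite leqn0 => /eqP ->.
rewrite leq_eqVlt => /predU1P[-> // | lt_in].
by rewrite /= nth_rcons size_fps_inv_aux lt_in IHn.
Qed.

Lemma fps_invS f n :
  fps_inv f n.+1 = - (f 0%N)^-1 * \sum_(i < n.+1) f i.+1 * fps_inv f (n - i)%N.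
Proof.
rewrite {1}/fps_inv /= nth_rcons size_fps_inv_aux ltnn eqxx.
by congr (_ * _); apply: eq_bigr => i _; rewrite nth_fps_inv_aux ?leq_subr.
Qed.

Lemma fps_mul_constX_coef c g n :
  fps_mul (fps_mul (fps_const c) fps_X) g n = if n is n'.+1 then c * g n' else 0.
Proof.
have cX i : fps_mul (fps_const c) fps_X i = if i == 1%N then c else 0.
  rewrite /fps_mul big_ord_recl big1 => [|j _]; last by rewrite mul0r.
  by rewrite /fps_const /fps_X subn0 addr0; case: (i == 1%N); rewrite ?mulr1 ?mulr0.
rewrite {1}/fps_mul; case: n => [|n]; first by rewrite big_ord1 cX mul0r.
rewrite big_ord_recl cX mul0r add0r big_ord_recl cX /= subn1 /= big1 ?addr0 // => i _.
by rewrite cX mul0r.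
Qed.

Lemma fps_inv_one_sub_FA m (A : 'M[bool]_m) n :
  fps_inv (fps_sub (fps_const 1) (FA A)) n = (nforests A n)%:R.
Proof.
elim/ltn_ind: n => -[_ | n IH].
  by rewrite /fps_inv /fps_sub /fps_const /FA /= subr0 invr1 nforests0.
rewrite fps_invS nforestsS natr_sum /fps_sub /fps_const /FA /= subr0 invr1 mulN1r -sumrN.
by apply: eq_bigr => i _; rewrite IH ?ltnS ?leq_subr // natrM sub0r mulNr opprK.
Qed.

Theorem theorem25 (m m' : nat) (A : 'M[bool]_m) (hm' : (0 < m')%N) :
  FA (ext_mx m' A) =
  fps_add (FA A)
    (fps_div (fps_mul (fps_const m'%:R) fps_X)
             (fps_sub (fps_const 1) (FA A))).
Proof.
(* The identity holds for m' = 0 as well. *)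
apply: functional_extensionality => n.
rewrite /fps_add /fps_div fps_mul_constX_coef.
case: n => [|n]; first by rewrite /FA addr0.
by rewrite fps_inv_one_sub_FA /FA /= tA_ext_mx natrD natrM.
Qed.
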